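(* Let $M$ be an ACI-matrix over a field $\mathbb{F}$. Then: (i) $M$ has a factor set if and only if $M$ is not FmR. (ii) $M$ has a semifactor set if and only if $M$ is FmR.
   Context: Let $\mathbb{F}$ be a field. An ACI-matrix is a matrix with entries in $\mathbb{F}[x_1,\dots,x_k]$ whose entries are polynomials of degree at most one and such that no indeterminate appears in two different columns. A completion is an assignment of values in $\mathbb{F}$ to all indeterminates; $\mathrm{maxRank}(M)$ is the maximum rank of a completion. Wide/tall/square mean more columns than rows / more rows than columns / equal. ACI-matrices of size $0\times q$ ($q>0$, wide degenerate), $p\times 0$ ($p>0$, tall degenerate) and $0\times 0$ (void) are allowed, also as blocks. $N$ is FRmR if $\mathrm{maxRank}(N)=\mathrm{rows}(N)$, FCmR if $\mathrm{maxRank}(N)=\mathrm{cols}(N)$, FmR if $\mathrm{maxRank}(N)=\min\{\mathrm{rows}(N),\mathrm{cols}(N)\}$; by convention tall degenerate is FRmR, wide degenerate is FCmR, void is both. For an $m\times n$ block matrix $\begin{bmatrix} A & B\\ 0 & C\end{bmatrix}$ with lower-left $r\times s$ zero block, the zero block is Big if $r+s>\max\{m,n\}$, Medium if $r+s=\max\{m,n\}$. For $F=\{f_1<\dots<f_s\}\subseteq\{1,\dots,n\}$ with complement $\{g_1<\dots<g_{n-s}\}$, let $Q_F$ be the $n\times n$ permutation matrix such that, for any $m\times n$ $M$, $MQ_F$ has as columns $f_1,\dots,f_s,g_1,\dots,g_{n-s}$ of $M$ in that order. $F$ is a factor set of $M$ if there is a nonsingular constant $m\times m$ matrix $R$ with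 $RMQ_F=\begin{bmatrix} A & B\\ 0 & C\end{bmatrix}$, where $A$ has $\#F$ columns, the zero block is Big, $A$ is FRmR and $C$ is FCmR. $F$ is a semifactor set of $M$ if the same holds with the zero block Medium instead of Big. *)

From mathcomp Require Import all_boot all_algebra.
From mathcomp Require Import boolp.
Set Implicit Arguments. Unset Strict Implicit. Unset Printing Implicit Defensive.
Import GRing.Theory.
Local Open Scope ring_scope.

(* An m x n matrix over F[x_1,...,x_k] whose entries have degree at most one:
   entry (i,j) is  acst i j + \sum_t acoef t i j * x_t. *)
Record affmx (F : fieldType) (k m n : nat) := AffMx {
  acst : 'M[F]_(m, n);
  acoef : 'I_k -> 'M[F]_(m, n) }.

Section Defs.
Variables (F : fieldType) (k : nat).

Definition is_aci m n (M : affmx F k m n) : Prop :=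
  forall (t : 'I_k) (i1 i2 : 'I_m) (j1 j2 : 'I_n),
    acoef M t i1 j1 != 0 -> acoef M t i2 j2 != 0 -> j1 = j2.

Definition completion m n (M : affmx F k m n) (v : 'I_k -> F) : 'M[F]_(m, n) :=
  acst M + \sum_(t < k) v t *: acoef M t.

Definition maxRank m n (M : affmx F k m n) : nat :=
  \max_(r < (minn m n).+1 | `[< exists v, \rank (completion M v) = r >]) r.

Definition FRmR m n (M : affmx F k m n) : Prop := maxRank M = m.
Definition FCmR m n (M : affmx F k m n) : Prop := maxRank M = n.
Definition FmR m n (M : affmx F k m n) : Prop := maxRank M = minn m n.

Definition affmulmx_l m m' n (R : 'M[F]_(m', m)) (M : affmx F k m n)
  : affmx F k m' n := AffMx (R *m acst M) (fun t => R *m acoef M t).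
Definition affmulmx_r m n n' (M : affmx F k m n) (Q : 'M[F]_(n, n'))
  : affmx F k m n' := AffMx (acst M *m Q) (fun t => acoef M t *m Q).

Definition affsub m n (Rw : {set 'I_m}) (Cl : {set 'I_n}) (M : affmx F k m n)
  : affmx F k #|Rw| #|Cl| :=
  AffMx (\matrix_(i, j) acst M (enum_val i) (enum_val j))
        (fun t => \matrix_(i, j) acoef M t (enum_val i) (enum_val j)).

(* Q_F : the column of M Q_F at position p is column colidx S p of M,
   where the columns are listed as f_1 < ... < f_s, g_1 < ... < g_(n-s). *)
Definition colidx n (S : {set 'I_n}) (p : 'I_n) : 'I_n :=
  nth p (enum S ++ enum (~: S)) p.
Definition QF n (S : {set 'I_n}) : 'M[F]_n :=
  \matrix_(i, p) (i == colidx S p)%:R.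

Definition zero_entry m n (M : affmx F k m n) i j : Prop :=
  acst M i j = 0 /\ forall t, acoef M t i j = 0.

(* R M Q_S = [A B; 0 C] with A having #|S| columns, the zero block being
   r x #|S| satisfying cond r #|S|, A FRmR and C FCmR *)
Definition block_decomp (cond : nat -> nat -> Prop) m n
    (M : affmx F k m n) (S : {set 'I_n}) : Prop :=
  exists R : 'M[F]_m, R \in unitmx /\
    let M' := affmulmx_r (affmulmx_l R M) (QF S) in
    exists r : nat, (r <= m)%N /\ cond r #|S| /\
      (forall (i : 'I_m) (p : 'I_n), (m - r <= i)%N -> (p < #|S|)%N ->
          zero_entry M' i p) /\
      FRmR (affsub [set i : 'I_m | (i < m - r)%N] [set p : 'I_n | (p < #|S|)%N] M') /\
      FCmR (affsub [set i : 'I_m | (m - r <= i)%N] [set p : 'I_n | (#|S| <= p)%N] M').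

Definition factor_set m n (M : affmx F k m n) (S : {set 'I_n}) : Prop :=
  block_decomp (fun r s => (maxn m n < r + s)%N) M S.
Definition semifactor_set m n (M : affmx F k m n) (S : {set 'I_n}) : Prop :=
  block_decomp (fun r s => (r + s)%N = maxn m n) M S.

End Defs.

From mathcomp Require Import all_boot all_algebra perm.
From mathcomp Require Import boolp zify.
Set Implicit Arguments. Unset Strict Implicit. Unset Printing Implicit Defensive.
Import GRing.Theory.

(* Column j of a completion of an ACI-matrix ranges over an affine family
   c_j + a B_j, and since no indeterminate is shared between columns the columns
   can be chosen independently.  Let U_S be the span of all these families for
   j in S.  A deficiency version of Rado's theorem for affine families shows
   that if S minimises rank U_S + n - |S|, some completion has rank at least
   that minimum while its S-columns already span U_S.  Passing to a row basis in
   which U_S occupies the first rank U_S coordinates then gives a block form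
   with an (m - rank U_S) x |S| zero block, an FRmR upper-left and an FCmR
   lower-right block, and the zero block is Big exactly when M is not FmR.
   Conversely, any such block form forces maxRank M = (m - r) + (n - s): the
   zero block caps the rank, and completing the two diagonal blocks
   independently attains it.  FmR matrices have the trivial semifactor sets
   {} (if n <= m) or all columns (if m < n). *)

Section AffineRado.
Variables (F : fieldType) (I : finType) (k m : nat).
Variables (c : I -> 'rV[F]_m) (B : I -> 'M[F]_(k, m)).

Definition affine_span j : 'M[F]_m := <<col_mx (c j) (B j)>>%MS.
Definition span_of (J : {set I}) : 'M[F]_m := (\sum_(j in J) affine_span j)%MS.
Definition affine_pt (a : I -> 'rV[F]_k) j : 'rV[F]_m := (c j + a j *m B j)%R.
Definition pts_span a (J : {set I}) : 'M[F]_m := (\sum_(j in J) <<affine_pt a j>>)%MS.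

Lemma affine_pt_sub a j : (affine_pt a j <= affine_span j)%MS.
Proof.
rewrite genmxE -addsmxE addmx_sub ?addsmxSl //.
exact: submx_trans (submxMl _ _) (addsmxSr _ _).
Qed.

Lemma affine_pt_notsub j (W : 'M[F]_m) :
  ~~ (affine_span j <= W)%MS -> exists a, ~~ (affine_pt a j <= W)%MS.
Proof.
move=> notsub; have [cW | cNW] := boolP (c j <= W)%MS; last first.
  by exists (fun _ => 0%R); rewrite /affine_pt mul0mx addr0.
have /row_subPn [t BtNW] : ~~ (B j <= W)%MS.
  by apply: contra notsub => BW; rewrite genmxE -addsmxE addsmx_sub cW.
exists (fun _ => delta_mx ord0 t); apply: contra BtNW => ptW.
rewrite rowE -[(delta_mx ord0 t *m B j)%R](addKr (c j)) addmx_sub ?eqmx_opp //.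
Qed.

Lemma pts_span_sub a J : (pts_span a J <= span_of J)%MS.
Proof.
by apply/sumsmx_subP => j Jj; rewrite (sumsmx_sup j) // genmxE affine_pt_sub.
Qed.

Lemma pts_spanS a a' (J J' : {set I}) :
  J \subset J' -> {in J, a =1 a'} -> (pts_span a J <= pts_span a' J')%MS.
Proof.
move=> sJJ' eqa; apply/sumsmx_subP => j Jj.
by rewrite /affine_pt eqa // (sumsmx_sup j) // (subsetP sJJ').
Qed.

Lemma span_ofU (J1 J2 : {set I}) :
  (span_of (J1 :|: J2) <= span_of J1 + span_of J2)%MS.
Proof.
apply/sumsmx_subP => j; rewrite inE => /orP[] Jj.
  by rewrite (submx_trans _ (addsmxSl _ _)) // (sumsmx_sup j).
by rewrite (submx_trans _ (addsmxSr _ _)) // (sumsmx_sup j).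
Qed.

Definition rado_hall (W : 'M[F]_m) (d : nat) (J : {set I}) :=
  forall J' : {set I}, J' \subset J -> \rank W + #|J'| <= \rank (W + span_of J')%MS + d.

Definition rado_transversal (W : 'M[F]_m) (d : nat) (J : {set I}) :=
  exists a, \rank W + #|J| <= \rank (W + pts_span a J)%MS + d.

Lemma rado_hall_nonempty W d (J : {set I}) :
  (forall K : {set I}, K \subset J -> K != set0 ->
     \rank W + #|K| <= \rank (W + span_of K)%MS + d) ->
  rado_hall W d J.
Proof.
move=> hallJ K sKJ; have [->|nzK] := eqVneq K set0; last exact: hallJ.
by rewrite cards0 addn0 (leq_trans (mxrankS (addsmxSl W (span_of set0)))) ?leq_addr.
Qed.

Lemma rado_transversal0 W d : rado_transversal W d set0.
Proof.
exists (fun _ => 0%R); rewrite cards0 addn0.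
exact: leq_trans (mxrankS (addsmxSl _ _)) (leq_addr _ _).
Qed.

Section RadoStep.
Variable J : {set I}.
Hypothesis IH : forall (J' : {set I}) W d,
  #|J'| < #|J| -> rado_hall W d J' -> rado_transversal W d J'.

(* A tight subset J' has a transversal spanning W + span_of J'; contract it. *)
Lemma rado_tight (W : 'M[F]_m) d (J' : {set I}) :
  J' \subset J -> J' != set0 -> J' != J ->
  \rank (W + span_of J')%MS + d <= \rank W + #|J'| ->
  rado_hall W d J -> rado_transversal W d J.
Proof.
move=> sJ'J nzJ' neJ' tight hall.
have ltJ' : #|J'| < #|J| by rewrite proper_card // properEneq neJ'.
have [a1 Ha1] := IH ltJ' (fun J'' sJ'' => hall J'' (subset_trans sJ'' sJ'J)).
set W' := (W + span_of J')%MS in tight *.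
have W'_sub : (W' <= W + pts_span a1 J')%MS.
  have inc : (W + pts_span a1 J' <= W')%MS by rewrite addsmxS ?pts_span_sub.
  have : (W + pts_span a1 J' == W')%MS.
    by rewrite -(mxrank_leqif_eq inc).2 eqn_leq mxrankS //=; lia.
  by case/andP.
set K := J :\: J'.
have cardK : #|K| + #|J'| = #|J| by rewrite -(cardsID J' J) (setIidPr sJ'J) addnC.
have ltK : #|K| < #|J| by move: nzJ'; rewrite -card_gt0; lia.
have hallK : rado_hall W' 0 K.
  move=> K' sK'K; have /subsetDP[sK'J disjK'] := sK'K.
  have := hall (J' :|: K'); rewrite subUset sJ'J sK'J => /(_ isT).
  rewrite cardsU setIC (disjoint_setI0 disjK') cards0 subn0.
  have : \rank (W + span_of (J' :|: K'))%MS <= \rank (W' + span_of K')%MS.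
    rewrite mxrankS // addsmx_sub /W' -addsmxA addsmxSl /=.
    by rewrite (submx_trans (span_ofU _ _)) // addsmxSr.
  lia.
have [a2 Ha2] := IH ltK hallK.
exists (fun j => if j \in J' then a1 j else a2 j).
have : \rank (W' + pts_span a2 K)%MS <=
       \rank (W + pts_span (fun j => if j \in J' then a1 j else a2 j) J)%MS.
  rewrite mxrankS // addsmx_sub (submx_trans W'_sub) /=; last first.
    by rewrite addsmxS // pts_spanS // => j ->.
  rewrite (submx_trans _ (addsmxSr _ _)) // pts_spanS ?subsetDl //.
  by move=> j; rewrite inE => /andP[/negbTE ->].
have := hall J' sJ'J; rewrite -/W'; lia.
Qed.

Section Slack.
Variables (W : 'M[F]_m) (d : nat) (j : I).
Hypothesis Jj : j \in J.
Hypothesis strict : forall K : {set I}, K \subset J :\ j -> K != set0 ->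
  \rank W + #|K| < \rank (W + span_of K)%MS + d.

Let cardJ : #|J| = #|J :\ j|.+1. Proof. by rewrite (cardsD1 j J) Jj. Qed.
Let ltK : #|J :\ j| < #|J|. Proof. by rewrite cardJ. Qed.

(* j then uses up one unit of the deficiency. *)
Lemma rado_slack_absorbed :
  (affine_span j <= W)%MS -> rado_hall W d J -> rado_transversal W d J.
Proof.
move=> spanW hall; have d_gt0 : 0 < d.
  have := hall [set j]; rewrite sub1set Jj cards1 => /(_ isT).
  have -> : (W + span_of [set j] :=: W)%MS.
    by apply/eqmxP; rewrite addsmx_sub submx_refl /span_of big_set1 spanW addsmxSl.
  lia.
have hallK : rado_hall W d.-1 (J :\ j).
  by apply: rado_hall_nonempty => K sKJ nzK; have := strict sKJ nzK; lia.
have [a Ha] := IH ltK hallK; exists a.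
have : \rank (W + pts_span a (J :\ j))%MS <= \rank (W + pts_span a J)%MS.
  by rewrite mxrankS // addsmxS // pts_spanS // subD1set.
rewrite cardJ; lia.
Qed.

(* Add to W a point of the family of j lying outside W. *)
Lemma rado_slack_escaping : ~~ (affine_span j <= W)%MS -> rado_transversal W d J.
Proof.
move=> /affine_pt_notsub[a0 a0NW]; set W' := (W + <<affine_pt a0 j>>)%MS.
have rankW' : \rank W' = (\rank W).+1.
  apply/eqP; rewrite eqn_leq (leq_trans (mxrank_adds_leqif _ _)) /=; last first.
    by rewrite mxrank_gen -[(\rank W).+1]addn1 leq_add2l rank_leq_row.
  rewrite /W' (ltn_leqif (mxrank_leqif_sup (addsmxSl _ _))).
  by apply: contra a0NW => /(submx_trans (addsmxSr _ _)); rewrite genmxE.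
have hallK : rado_hall W' d (J :\ j).
  apply: rado_hall_nonempty => K sKJ nzK.
  have : \rank (W + span_of K)%MS <= \rank (W' + span_of K)%MS.
    by rewrite mxrankS // addsmxS // addsmxSl.
  by have := strict sKJ nzK; lia.
have [a2 Ha2] := IH ltK hallK; exists (fun i => if i == j then a0 i else a2 i).
rewrite cardJ addnS -addSn -rankW' (leq_trans Ha2) // leq_add2r mxrankS //.
rewrite -addsmxA addsmxS // addsmx_sub (sumsmx_sup j) //= ?genmxE /affine_pt ?eqxx //.
by rewrite pts_spanS ?subD1set // => i; rewrite !inE => /andP[/negbTE ->].
Qed.

End Slack.

End RadoStep.

Theorem rado (W : 'M[F]_m) d (J : {set I}) : rado_hall W d J -> rado_transversal W d J.
Proof.
elim: {J}_.+1 {-2}J (ltnSn #|J|) W d => // N IH J ltJN W d hall.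
have {}IH (J' : {set I}) W' d' :
    #|J'| < #|J| -> rado_hall W' d' J' -> rado_transversal W' d' J'.
  by move=> ltJ'; apply: IH; apply: leq_trans ltJ' _.
have [->|/set0Pn[j Jj]] := eqVneq J set0; first exact: rado_transversal0.
have [/existsP[J' /and4P[sJ'J nzJ' neJ' tight]] | noTight] := boolP [exists J' : {set I},
    [&& J' \subset J, J' != set0, J' != J & \rank (W + span_of J')%MS + d <= \rank W + #|J'|]].
  exact: rado_tight tight hall.
have strict (K : {set I}) : K \subset J :\ j -> K != set0 ->
    \rank W + #|K| < \rank (W + span_of K)%MS + d.
  move=> sKJ nzK; have neK : K != J.
    by apply: contraTneq sKJ => ->; rewrite subsetD1 Jj andbF.
  move: noTight; rewrite negb_exists => /forallP/(_ K).
  by rewrite (subset_trans sKJ (subD1set J j)) nzK neK /= -ltnNge; lia.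
have [spanW | spanNW] := boolP (affine_span j <= W)%MS.
  exact: rado_slack_absorbed strict spanW hall.
exact: rado_slack_escaping strict spanNW.
Qed.

(* The two applications of [rado]: inside a minimiser S the points can be chosen
   to span all of span_of S, and outside S they are independent modulo it. *)
Lemma rado_argmin (S : {set I}) :
  (forall S' : {set I}, \rank (span_of S) + #|~: S| <= \rank (span_of S') + #|~: S'|) ->
  exists a, (span_of S <= pts_span a S)%MS /\
            \rank (span_of S) + #|~: S| <= \rank (pts_span a setT).
Proof.
move=> Smin; set U := span_of S in Smin *.
have cardS := cardsC S; have cardI (J : {set I}) := cardsC J.
have rankU : \rank U <= #|S|.
  by have := Smin set0; rewrite [span_of set0]big_set0 mxrank0 setC0 cardsT; lia.
have hallS : rado_hall 0 (#|S| - \rank U) S.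
  move=> J' sJ'S; have := Smin J'; have := subset_leq_card sJ'S.
  by rewrite mxrank0 adds0mx_id; have := cardI J'; lia.
have [a1 Ha1] := rado hallS; move: Ha1; rewrite mxrank0 adds0mx_id => Ha1.
have Usub : (U <= pts_span a1 S)%MS.
  have inc : (pts_span a1 S <= U)%MS := pts_span_sub a1 S.
  have : (pts_span a1 S == U)%MS.
    by rewrite -(mxrank_leqif_eq inc).2 eqn_leq mxrankS //=; lia.
  by case/andP.
have hallC : rado_hall U 0 (~: S).
  move=> K sKC; have := Smin (S :|: K).
  have disjSK : S :&: K = set0 by rewrite setIC disjoint_setI0 // disjoints_subset.
  have := cardI (S :|: K); rewrite cardsU disjSK cards0 subn0.
  have : \rank (span_of (S :|: K)) <= \rank (U + span_of K) := mxrankS (span_ofU S K).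
  lia.
have [a2 Ha2] := rado hallC.
set a := fun j => if j \in S then a1 j else a2 j.
have a1a : {in S, a1 =1 a} by move=> j Sj; rewrite /a Sj.
have a2a : {in ~: S, a2 =1 a} by move=> j; rewrite /a inE => /negbTE ->.
have Usub' : (U <= pts_span a S)%MS by rewrite (submx_trans Usub) ?pts_spanS.
exists a; split => //; rewrite addn0 in Ha2; rewrite (leq_trans Ha2) // mxrankS //.
by rewrite addsmx_sub (submx_trans Usub') ?pts_spanS ?subsetT.
Qed.

End AffineRado.

Section MatrixFacts.
Variable F : fieldType.
Local Open Scope ring_scope.

Definition mxsub_set m n (Rw : {set 'I_m}) (Cl : {set 'I_n}) (X : 'M[F]_(m, n))
  : 'M[F]_(#|Rw|, #|Cl|) := mxsub enum_val enum_val X.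

Lemma mxrank_mxsub m n m' n' (f : 'I_m' -> 'I_m) (g : 'I_n' -> 'I_n) (X : 'M[F]_(m, n)) :
  (\rank (mxsub f g X) <= \rank X)%N.
Proof.
have -> : mxsub f g X = (rowsub f 1%:M *m X *m colsub g 1%:M)%R.
  by rewrite mulmx_colsub mulmx1 mul_rowsub_mx mul1mx mxsubcr.
exact: leq_trans (mxrankM_maxl _ _) (mxrankM_maxr _ _).
Qed.

Lemma mxrank_rowsub_set m n (Rw : {set 'I_m}) (X : 'M[F]_(m, n)) :
  (forall i, i \notin Rw -> row i X = 0) ->
  (\rank X <= \rank (rowsub (fun i : 'I_#|Rw| => enum_val i) X))%N.
Proof.
move=> X0; apply/mxrankS/row_subP => i.
have [Rwi | /X0 ->] := boolP (i \in Rw); last exact: sub0mx.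
by rewrite -(enum_rankK_in Rwi Rwi) -row_rowsub row_sub.
Qed.

Lemma mxrank_mxsub_set m n (Rw : {set 'I_m}) (Cl : {set 'I_n}) (X : 'M[F]_(m, n)) :
  (forall i j, X i j != 0 -> (i \in Rw) && (j \in Cl)) ->
  \rank (mxsub_set Rw Cl X) = \rank X.
Proof.
move=> supp; apply/eqP; rewrite eqn_leq mxrank_mxsub /mxsub_set mxsubrc /=.
have colsub_supp : (\rank X <= \rank (colsub (fun j : 'I_#|Cl| => enum_val j) X))%N.
  rewrite -mxrank_tr -[leqRHS]mxrank_tr.
  have -> : (colsub (fun j : 'I_#|Cl| => enum_val j) X)^T =
            rowsub (fun j : 'I_#|Cl| => enum_val j) X^T by apply/matrixP => ? ?; rewrite !mxE.
  apply: mxrank_rowsub_set => j Clj; apply/rowP => i; rewrite !mxE.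
  by apply: contraNeq Clj => /supp /andP[].
apply: leq_trans colsub_supp (mxrank_rowsub_set _) => i Rwi; apply/rowP => j.
by rewrite !mxE; apply: contraNeq Rwi => /supp /andP[].
Qed.

Lemma eq_mxsub_set m n (Rw : {set 'I_m}) (Cl : {set 'I_n}) (X Y : 'M[F]_(m, n)) :
  (forall i j, i \in Rw -> j \in Cl -> X i j = Y i j) ->
  mxsub_set Rw Cl X = mxsub_set Rw Cl Y.
Proof. by move=> eqXY; apply/matrixP => i j; rewrite !mxE eqXY ?enum_valP. Qed.

Lemma card_ord_lt m d : (d <= m)%N -> #|[set i : 'I_m | (i < d)%N]| = d.
Proof.
move=> le_dm; rewrite -sum1_card -[RHS]card_ord -sum1_card.
rewrite (big_ord_widen m (fun=> 1%N) le_dm); by apply: eq_bigl => i; rewrite inE.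
Qed.

Lemma card_ord_ge m d : (d <= m)%N -> #|[set i : 'I_m | (d <= i)%N]| = (m - d)%N.
Proof.
move=> le_dm; have := cardsC [set i : 'I_m | (i < d)%N].
have -> : ~: [set i : 'I_m | (i < d)%N] = [set i : 'I_m | (d <= i)%N].
  by apply/setP => i; rewrite !inE -leqNgt.
rewrite card_ord_lt // card_ord; lia.
Qed.

Lemma pid_mulmxE m n d (X : 'M[F]_(m, n)) i j :
  (pid_mx d *m X) i j = if (i < d)%N then X i j else 0.
Proof.
rewrite mxE (bigD1 i) //= big1 ?addr0 => [|l /negbTE nli]; last first.
  by rewrite mxE eq_sym (_ : (l == i :> nat) = false) ?mul0r.
by rewrite mxE eqxx /=; case: ifP; rewrite ?mul1r ?mul0r.
Qed.

Lemma copid_mulmxE m n d (X : 'M[F]_(m, n)) i j :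
  (copid_mx d *m X) i j = if (d <= i)%N then X i j else 0.
Proof.
rewrite /copid_mx mulmxBl mul1mx.
have -> : (X - pid_mx d *m X) i j = X i j - (pid_mx d *m X) i j by rewrite !mxE.
by rewrite pid_mulmxE; case: ltnP; rewrite ?subrr ?subr0.
Qed.

Lemma mulmx_pidE m n s (X : 'M[F]_(m, n)) i j :
  (X *m pid_mx s) i j = if (j < s)%N then X i j else 0.
Proof. by rewrite -[X]trmxK -tr_pid_mx -trmx_mul mxE pid_mulmxE mxE trmxK. Qed.

Lemma mxrank_mul_sandwich m n (P : 'M[F]_m) (A : 'M[F]_(m, n)) (Q : 'M[F]_n) :
  P *m A *m Q = 0 -> (\rank (A *m Q) + \rank (P *m A) <= \rank A)%N.
Proof.
move=> PAQ0; rewrite -(mxrank_tr A) -(mxrank_mul_ker A^T P^T) addnC.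
rewrite -trmx_mul mxrank_tr leq_add2l -mxrank_tr mxrankS // sub_capmx.
rewrite trmx_mul submxMl; apply/sub_kermxP.
by rewrite -!trmx_mul mulmxA PAQ0 trmx0.
Qed.

Lemma trmx_mul_entry m n (A : 'M[F]_m) (X : 'M[F]_(m, n)) i j :
  (A^T *m X) i j = ((col j X)^T *m A) 0 i.
Proof. by rewrite !mxE; apply: eq_bigr => l _; rewrite !mxE mulrC. Qed.

Lemma row_ebase_coord_eq0 m (U : 'M[F]_m) (u : 'rV[F]_m) (i : 'I_m) :
  (u <= U)%MS -> (\rank U <= i)%N -> (u *m invmx (row_ebase U)) 0 i = 0.
Proof.
rewrite -(eq_row_base U) => /submxP[D ->] rankUi.
rewrite /row_base -mulmxA mulmxK ?row_ebase_unit // mxE big1 // => l _.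
by rewrite mxE; case: eqP => [-> | _]; rewrite ?ltnNge ?rankUi mulr0.
Qed.

Section BlockTriangular.
Variables (m n d s : nat) (N : 'M[F]_(m, n)).
Hypothesis N0 : forall (i : 'I_m) (p : 'I_n), (d <= i)%N -> (p < s)%N -> N i p = 0.

Local Notation top := [set i : 'I_m | (i < d)%N].
Local Notation bottom := [set i : 'I_m | (d <= i)%N].
Local Notation left := [set p : 'I_n | (p < s)%N].
Local Notation right := [set p : 'I_n | (s <= p)%N].

Lemma mxrank_block_ul : \rank (mxsub_set top left N) = \rank (N *m (pid_mx s : 'M[F]_n)).
Proof.
rewrite -(@mxrank_mxsub_set _ _ top left) => [|i p]; last first.
  rewrite mulmx_pidE !inE; case: ifP => [ps | _]; last by rewrite eqxx.
  by rewrite andbT ltnNge; apply: contra => di; rewrite N0.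
by congr (\rank _); apply: eq_mxsub_set => i p _; rewrite inE mulmx_pidE => ->.
Qed.

Lemma mxrank_block_dr : \rank (mxsub_set bottom right N) = \rank (copid_mx d *m N).
Proof.
rewrite -(@mxrank_mxsub_set _ _ bottom right) => [|i p]; last first.
  rewrite copid_mulmxE !inE; case: ifP => [di | _]; last by rewrite eqxx.
  by rewrite /= leqNgt; apply: contra => ps; rewrite N0.
by congr (\rank _); apply: eq_mxsub_set => i p; rewrite inE copid_mulmxE => ->.
Qed.

Lemma mxrank_block_ub : (d <= m)%N -> (\rank N <= d + \rank (mxsub_set bottom right N))%N.
Proof.
move=> le_dm; rewrite mxrank_block_dr.
have splitN : N = pid_mx d *m N + copid_mx d *m N.
  by rewrite /copid_mx mulmxBl mul1mx addrC subrK.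
rewrite {1}splitN (leq_trans (mxrank_add _ _)) // leq_add2r.
by rewrite (leq_trans (mxrankM_maxl _ _)) // rank_pid_mx.
Qed.

Lemma mxrank_block_lb :
  (\rank (mxsub_set top left N) + \rank (mxsub_set bottom right N) <= \rank N)%N.
Proof.
rewrite mxrank_block_ul mxrank_block_dr mxrank_mul_sandwich //.
apply/matrixP => i p; rewrite mulmx_pidE copid_mulmxE mxE.
by case: ifP => // ps; case: ifP => // di; rewrite N0.
Qed.

End BlockTriangular.

End MatrixFacts.

Section ColumnOrder.
Variables (n : nat) (S : {set 'I_n}).

Lemma colidx_inj : injective (colidx S).
Proof.
pose s := enum S ++ enum (~: S).
have s_uniq : uniq s.
  rewrite cat_uniq !enum_uniq andbT /=; apply/hasPn => j.
  by rewrite !mem_enum inE => /negbTE ->.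
have size_s : size s = n by rewrite size_cat -!cardE cardsC card_ord.
move=> p q; rewrite /colidx -/s (set_nth_default q) ?size_s // => /eqP.
by rewrite nth_uniq ?size_s // => /eqP /val_inj.
Qed.

Definition colperm : {perm 'I_n} := perm colidx_inj.

Lemma colpermE (p : 'I_n) : colperm p = colidx S p.
Proof. exact: permE. Qed.

Lemma QF_perm (F : fieldType) : QF F S = perm_mx colperm^-1.
Proof.
apply/matrixP => i p.
by rewrite !mxE -colpermE -{1}(permKV colperm i) (inj_eq (@perm_inj _ _)).
Qed.

Lemma mulmx_QFE (F : fieldType) m (X : 'M[F]_(m, n)) i p :
  ((X *m QF F S) i p = X i (colidx S p))%R.
Proof. by rewrite QF_perm -col_permE mxE colpermE. Qed.

Lemma colidx_in (p : 'I_n) : (p < #|S|)%N -> colidx S p \in S.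
Proof. by move=> ltpS; rewrite /colidx nth_cat -cardE ltpS -mem_enum mem_nth -?cardE. Qed.

Lemma colidx_notin (p : 'I_n) : (#|S| <= p)%N -> colidx S p \notin S.
Proof.
move=> leSp; rewrite /colidx nth_cat -cardE ltnNge leSp /=.
have : nth p (enum (~: S)) (p - #|S|) \in ~: S.
  rewrite -mem_enum mem_nth // -cardE; have := cardsC S; have := ltn_ord p.
  by rewrite card_ord; set t := #|~: S|; lia.
by rewrite inE.
Qed.

Lemma colidx_onto j : j \in S -> exists2 p : 'I_n, (p < #|S|)%N & colidx S p = j.
Proof.
move=> Sj; exists ((colperm^-1)%g j); last by rewrite -colpermE permKV.
by rewrite ltnNge; apply: contraL Sj => /colidx_notin; rewrite -colpermE permKV.
Qed.

Lemma span_cols_sub_QF_pid (F : fieldType) m (X : 'M[F]_(m, n)) :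
  (\sum_(j in S) <<(col j X)^T>> <= (X *m QF F S *m (pid_mx #|S| : 'M[F]_n))^T)%MS%R.
Proof.
apply/sumsmx_subP => j /colidx_onto[p ltpS <-].
rewrite genmxE (_ : col (colidx S p) X = col p (X *m QF F S *m pid_mx #|S|)).
  by rewrite tr_col row_sub.
by apply/colP => i; rewrite [LHS]mxE [RHS]mxE mulmx_pidE ltpS mulmx_QFE.
Qed.

End ColumnOrder.

Section Completions.
Variables (F : fieldType) (k : nat).
Local Open Scope ring_scope.

Lemma completion_mull m m' n (R : 'M[F]_(m', m)) (M : affmx F k m n) v :
  completion (affmulmx_l R M) v = R *m completion M v.
Proof.
rewrite /completion /= mulmxDr mulmx_sumr; congr (_ + _).
by apply: eq_bigr => t _; rewrite scalemxAr.
Qed.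

Lemma completion_mulr m n n' (M : affmx F k m n) (Q : 'M[F]_(n, n')) v :
  completion (affmulmx_r M Q) v = completion M v *m Q.
Proof.
rewrite /completion /= mulmxDl mulmx_suml; congr (_ + _).
by apply: eq_bigr => t _; rewrite scalemxAl.
Qed.

Lemma completion_affsub m n (Rw : {set 'I_m}) (Cl : {set 'I_n}) (M : affmx F k m n) v :
  completion (affsub Rw Cl M) v = mxsub_set Rw Cl (completion M v).
Proof.
apply/matrixP => i j; rewrite !mxE !summxE; congr (_ + _).
by apply: eq_bigr => t _; rewrite !mxE.
Qed.

Lemma completion_zero_entry m n (M : affmx F k m n) i j v :
  zero_entry M i j -> completion M v i j = 0.
Proof.
case=> cst0 coef0; rewrite !mxE cst0 add0r summxE big1 // => t _.
by rewrite mxE coef0 mulr0.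
Qed.

Section MaxRank.
Variables (m n : nat) (M : affmx F k m n).

Lemma maxRank_leq : (maxRank M <= minn m n)%N.
Proof. by apply/bigmax_leqP => r _; rewrite -ltnS ltn_ord. Qed.

Lemma mxrank_completion_leq v : (\rank (completion M v) <= maxRank M)%N.
Proof.
have rank_lt : (\rank (completion M v) < (minn m n).+1)%N.
  by rewrite ltnS leq_min rank_leq_row rank_leq_col.
rewrite /maxRank (bigD1 (Ordinal rank_lt)) /=; first exact: leq_maxl.
by apply/asboolP; exists v.
Qed.

Lemma maxRank_le K : (forall v, \rank (completion M v) <= K)%N -> (maxRank M <= K)%N.
Proof. by move=> rankK; apply/bigmax_leqP => r /asboolP[v <-]. Qed.

Lemma maxRank_attained : exists v, \rank (completion M v) = maxRank M.
Proof.
have rank_lt : (\rank (completion M (fun=> 0%R)) < (minn m n).+1)%N.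
  by rewrite ltnS leq_min rank_leq_row rank_leq_col.
have P0 : `[< exists v, \rank (completion M v) = Ordinal rank_lt >].
  by apply/asboolP; exists (fun=> 0%R).
rewrite /maxRank (bigmax_eq_arg _ P0); case: arg_maxnP => // r /asboolP[v rank_r] _.
by exists v.
Qed.

Lemma FRmR_of_rank v : (m <= \rank (completion M v))%N -> FRmR M.
Proof.
move=> le_m; apply/eqP; rewrite eqn_leq (leq_trans maxRank_leq) ?geq_minl //=.
exact: leq_trans le_m (mxrank_completion_leq v).
Qed.

Lemma FCmR_of_rank v : (n <= \rank (completion M v))%N -> FCmR M.
Proof.
move=> le_n; apply/eqP; rewrite eqn_leq (leq_trans maxRank_leq) ?geq_minr //=.
exact: leq_trans le_n (mxrank_completion_leq v).
Qed.

End MaxRank.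

Section Equivalence.
Variables (m n : nat) (M : affmx F k m n) (R : 'M[F]_m) (S : {set 'I_n}).
Local Notation M' := (affmulmx_r (affmulmx_l R M) (QF F S)).

Lemma col_completion_equiv v p :
  col p (completion M' v) = R *m col (colidx S p) (completion M v).
Proof.
apply/colP => i; rewrite completion_mulr completion_mull mxE mulmx_QFE !mxE.
by apply: eq_bigr => l _; rewrite !mxE.
Qed.

Lemma mxrank_completion_equiv_leq v :
  (\rank (completion M' v) <= \rank (completion M v))%N.
Proof.
rewrite completion_mulr completion_mull.
exact: leq_trans (mxrankM_maxl _ _) (mxrankM_maxr _ _).
Qed.

Lemma mxrank_completion_equiv v :
  R \in unitmx -> \rank (completion M' v) = \rank (completion M v).
Proof.
move=> unitR; rewrite completion_mulr completion_mull QF_perm.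
by rewrite mxrankMfree ?row_free_unit ?unitmx_perm // eqmxMfull ?row_full_unit.
Qed.

End Equivalence.

End Completions.

Section ACI.
Variables (F : fieldType) (k m n : nat) (M : affmx F k m n).
Local Open Scope ring_scope.

Definition cst_col j : 'rV[F]_m := (col j (acst M))^T.
Definition coef_col j : 'M[F]_(k, m) := \matrix_(t, i) acoef M t i j.

Lemma tr_col_completion v j :
  (col j (completion M v))^T = affine_pt cst_col coef_col (fun=> \row_t v t) j.
Proof.
apply/rowP => i; rewrite !mxE summxE; congr (_ + _).
by apply: eq_bigr => t _; rewrite !mxE.
Qed.

Lemma coef_col_sub j t : ((col j (acoef M t))^T <= affine_span cst_col coef_col j)%MS.
Proof.
have -> : (col j (acoef M t))^T = row t (coef_col j) by apply/rowP => i; rewrite !mxE.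
by rewrite genmxE -addsmxE (submx_trans (row_sub _ _)) ?addsmxSr.
Qed.

Lemma cst_col_sub j : (cst_col j <= affine_span cst_col coef_col j)%MS.
Proof. by rewrite genmxE -addsmxE addsmxSl. Qed.

(* [glue w] gives each indeterminate the value that [w] prescribes for the column
   containing it; by the ACI condition that column is unique. *)
Definition owner (t : 'I_k) : option 'I_n := [pick j | [exists i, acoef M t i j != 0]].
Definition glue (w : 'I_n -> 'I_k -> F) t : F := if owner t is Some j then w j t else 0.

Hypothesis aciM : is_aci M.

Lemma col_completion_glue w j : col j (completion M (glue w)) = col j (completion M (w j)).
Proof.
apply/colP => i; rewrite !mxE !summxE; congr (_ + _); apply: eq_bigr => t _.
rewrite !mxE /glue; have [-> | nz] := eqVneq (acoef M t i j) 0; first by rewrite !mulr0.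
rewrite /owner; case: pickP => [j' /existsP[i' nz'] | none]; first by rewrite (aciM nz' nz).
by have /existsP[] := negbFE (none j); exists i.
Qed.

Lemma completion_of_points (a : 'I_n -> 'rV[F]_k) :
  exists v, forall j, (col j (completion M v))^T = affine_pt cst_col coef_col a j.
Proof.
exists (glue (fun j t => a j 0 t)) => j; rewrite col_completion_glue tr_col_completion.
by congr (_ + _ *m _); apply/rowP => t; rewrite !mxE.
Qed.

End ACI.

Section BlockDecomposition.
Variables (F : fieldType) (k m n : nat) (M : affmx F k m n).
Local Notation M' R S := (affmulmx_r (affmulmx_l R M) (QF F S)).
Local Notation top r := [set i : 'I_m | i < m - r].
Local Notation bottom r := [set i : 'I_m | m - r <= i].
Local Notation left S := [set p : 'I_n | p < #|S|].
Local Notation right S := [set p : 'I_n | #|S| <= p].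

Lemma card_set_leq (S : {set 'I_n}) : #|S| <= n.
Proof. by rewrite -[leqRHS]card_ord max_card. Qed.

Lemma maxRank_le_block R (S : {set 'I_n}) r :
  R \in unitmx -> r <= m ->
  (forall (i : 'I_m) (p : 'I_n), m - r <= i -> p < #|S| -> zero_entry (M' R S) i p) ->
  maxRank M <= (m - r) + (n - #|S|).
Proof.
move=> unitR le_rm zeroM'; apply: maxRank_le => v.
have zeroN (i : 'I_m) (p : 'I_n) : m - r <= i -> p < #|S| -> completion (M' R S) v i p = 0%R.
  by move=> ri pS; apply/completion_zero_entry/zeroM'.
rewrite -(mxrank_completion_equiv M S v unitR).
rewrite (leq_trans (mxrank_block_ub zeroN (leq_subr _ _))) // leq_add2l.
by rewrite (leq_trans (rank_leq_col _)) // card_ord_ge ?card_set_leq.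
Qed.

Section ACIBlocks.
Hypothesis aciM : is_aci M.

Lemma completion_equiv_glue (R : 'M[F]_m) (S : {set 'I_n}) w (i : 'I_m) (p : 'I_n) :
  completion (M' R S) (glue M w) i p = completion (M' R S) (w (colidx S p)) i p.
Proof.
have := col_completion_equiv M R S (glue M w) p.
by rewrite col_completion_glue // -col_completion_equiv => /colP/(_ i); rewrite !mxE.
Qed.

Lemma maxRank_ge_block R (S : {set 'I_n}) r :
  (forall (i : 'I_m) (p : 'I_n), m - r <= i -> p < #|S| -> zero_entry (M' R S) i p) ->
  FRmR (affsub (top r) (left S) (M' R S)) -> FCmR (affsub (bottom r) (right S) (M' R S)) ->
  (m - r) + (n - #|S|) <= maxRank M.
Proof.
move=> zeroM' fullA fullC.
have [vA rankA] := maxRank_attained (affsub (top r) (left S) (M' R S)).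
have [vC rankC] := maxRank_attained (affsub (bottom r) (right S) (M' R S)).
rewrite fullA completion_affsub [X in _ = X]card_ord_lt ?leq_subr // in rankA.
rewrite fullC completion_affsub [X in _ = X]card_ord_ge ?card_set_leq // in rankC.
pose v := glue M (fun j => if j \in S then vA else vC).
have zeroN (i : 'I_m) (p : 'I_n) :
    m - r <= i -> p < #|S| -> completion (M' R S) v i p = 0%R.
  by move=> ri pS; apply/completion_zero_entry/zeroM'.
apply: leq_trans (mxrank_completion_leq M v).
apply: leq_trans (mxrank_completion_equiv_leq M R S v).
rewrite -{1}rankA -rankC (leq_trans _ (mxrank_block_lb zeroN)) // leq_add // eq_leq //.
  congr (\rank _); apply: eq_mxsub_set => i p _.
  by rewrite inE completion_equiv_glue => /colidx_in ->.
congr (\rank _); apply: eq_mxsub_set => i p _.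
by rewrite inE completion_equiv_glue => /colidx_notin /negbTE ->.
Qed.

End ACIBlocks.

(* Left multiplication by the inverse row-echelon basis of U moves U into the
   first rank U coordinates; columns of M indexed by S then vanish below them. *)
Lemma block_decomp_of_span (cond : nat -> nat -> Prop) (S : {set 'I_n}) (U : 'M[F]_m) v :
  cond (m - \rank U) #|S| ->
  (forall j, j \in S -> (affine_span (cst_col M) (coef_col M) j <= U)%MS) ->
  (U <= \sum_(j in S) <<((col j (completion M v))^T)%R>>)%MS ->
  \rank U + (n - #|S|) <= \rank (completion M v) ->
  block_decomp cond M S.
Proof.
move=> condU spanS Usub rankN; pose R := trmx (invmx (row_ebase U)).
have unitR : R \in unitmx by rewrite unitmx_tr unitmx_inv row_ebase_unit.
exists R; split => //; exists (m - \rank U).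
have mrU : m - (m - \rank U) = \rank U by rewrite subKn ?rank_leq_col.
have zeroM' (i : 'I_m) (p : 'I_n) : m - (m - \rank U) <= i -> p < #|S| ->
    zero_entry (M' R S) i p.
  rewrite mrU => Ui /colidx_in /spanS spanU.
  split=> [|t] /=; rewrite mulmx_QFE trmx_mul_entry row_ebase_coord_eq0 //.
    exact: submx_trans (cst_col_sub M _) spanU.
  exact: submx_trans (coef_col_sub M _ _) spanU.
have zeroN (i : 'I_m) (p : 'I_n) : m - (m - \rank U) <= i -> p < #|S| ->
    completion (M' R S) v i p = 0%R.
  by move=> Ui pS; apply/completion_zero_entry/zeroM'.
split; first exact: leq_subr.
split=> //; split=> //; split.
- apply: (FRmR_of_rank (v := v)); rewrite completion_affsub [leqLHS]card_ord_lt ?leq_subr //.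
  rewrite [leqLHS]mrU (mxrank_block_ul zeroN) completion_mulr completion_mull.
  rewrite -!mulmxA eqmxMfull ?row_full_unit // mulmxA -[leqRHS]mxrank_tr.
  exact: leq_trans (mxrankS Usub) (mxrankS (span_cols_sub_QF_pid _ _)).
- apply: (FCmR_of_rank (v := v)).
  rewrite completion_affsub [leqLHS]card_ord_ge ?card_set_leq //.
  have := mxrank_block_ub zeroN (leq_subr _ _).
  rewrite mrU (mxrank_completion_equiv M S v unitR); move: rankN; lia.
Qed.

End BlockDecomposition.

Section Proposition.
Variables (F : fieldType) (k m n : nat) (M : affmx F k m n).

Lemma factor_set_notFmR S : factor_set M S -> ~ FmR M.
Proof.
case=> R [unitR [r [le_rm [big [zeroM' _]]]]] fmr.
have := maxRank_le_block unitR le_rm zeroM'; have := card_set_leq S.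
by move: big; rewrite fmr; lia.
Qed.

Lemma semifactor_set_FmR S : is_aci M -> semifactor_set M S -> FmR M.
Proof.
move=> aciM [R [unitR [r [le_rm [medium [zeroM' [fullA fullC]]]]]]].
have := maxRank_ge_block aciM zeroM' fullA fullC; have := maxRank_leq M.
have := card_set_leq S; rewrite /FmR; lia.
Qed.

Lemma FmR_semifactor_set : FmR M -> exists S, semifactor_set M S.
Proof.
move=> fmr; have [v rank_v] := maxRank_attained M; rewrite fmr in rank_v.
have [le_nm | lt_mn] := leqP n m.
  exists set0; apply: (block_decomp_of_span (U := 0%R) (v := v)) => [|j||].
  - by rewrite mxrank0 cards0; lia.
  - by rewrite inE.
  - exact: sub0mx.
  - by rewrite mxrank0 cards0 rank_v; lia.
exists setT; apply: (block_decomp_of_span (U := 1%:M%R) (v := v)) => [|j _||].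
- by rewrite mxrank1 cardsE card_ord; lia.
- exact: submx1.
- have full : (1%:M%R <= (completion M v)^T%R)%MS.
    by rewrite submx_full // /row_full mxrank_tr rank_v; apply/eqP; lia.
  apply: submx_trans full _; apply/row_subP => j.
  by rewrite -tr_col (sumsmx_sup j) ?inE ?genmxE.
- by rewrite mxrank1 cardsE card_ord subnn addn0 rank_v; lia.
Qed.

Lemma notFmR_factor_set : is_aci M -> ~ FmR M -> exists S, factor_set M S.
Proof.
move=> aciM nfmr; pose span := span_of (cst_col M) (coef_col M).
pose h (S : {set 'I_n}) := \rank (span S) + #|~: S|.
have [S _ Smin] := @arg_minnP _ set0 xpredT h isT.
have [a [Usub rank_a]] := rado_argmin (fun S' => Smin S' isT).
have [v col_v] := completion_of_points aciM a.
have rank_v : \rank (span S) + #|~: S| <= \rank (completion M v).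
  rewrite (leq_trans rank_a) // -[leqRHS]mxrank_tr mxrankS //.
  by apply/sumsmx_subP => j _; rewrite genmxE -col_v tr_col row_sub.
have rank_lt : \rank (span S) + #|~: S| < minn m n.
  have := mxrank_completion_leq M v; have := maxRank_leq M; move: nfmr; rewrite /FmR; lia.
have := cardsC S; rewrite card_ord => cardS.
exists S; apply: (block_decomp_of_span (U := span S) (v := v)) => [|j Sj||].
- by have := rank_leq_col (span S); lia.
- exact: (sumsmx_sup j).
- apply: submx_trans Usub _; apply/sumsmx_subP => j Sj.
  by rewrite -col_v (sumsmx_sup j).
- lia.
Qed.

End Proposition.

Theorem proposition3p4 (F : fieldType) (k m n : nat) (M : affmx F k m n) :
  is_aci M ->
  ((exists S : {set 'I_n}, factor_set M S) <-> ~ FmR M) /\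
  ((exists S : {set 'I_n}, semifactor_set M S) <-> FmR M).
Proof.
move=> aciM; split; split.
- by case=> S /factor_set_notFmR.
- exact: notFmR_factor_set.
- by case=> S /(semifactor_set_FmR aciM).
- exact: FmR_semifactor_set.
Qed.
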